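(* Let $G$ be a graph, $k$ a positive integer and $\mathbb{F}$ a field whose characteristic is either $0$ or a positive number not dividing $k$. Suppose the polynomials $y_v^k - 1$ ($v\in V(G)$) and $\sum_{j=0}^{k-1} y_u^{j} y_v^{k-1-j}$ ($\{u,v\}\in E(G)$) have a polynomial calculus refutation of degree $d$ over $\mathbb{F}$. Then $\mathbb{F}$ can be extended to a field $\mathbb{E}$ containing a primitive $k$th root of unity $w$, and the polynomials $$\sum_{j=1}^{k} x_{v,j} - 1 \ (v \in V(G)),\qquad x_{v,j}x_{v,j'} \ (v \in V(G),\ j\neq j' \in [k]),\qquad x_{u,j}x_{v,j}\ (\{u,v\} \in E(G),\ j \in [k])$$ have a polynomial calculus refutation over $\mathbb{E}$ of degree $\max\{2k,d\}$.
   Context: Polynomial calculus over a field $\mathbb{F}$: a derivation of $r$ from a set $S$ of polynomials is a sequence $p_1,\dots,p_\tau=r$ in which each $p_t$ is an element of $S$, a linear combination $\alpha p_i+\beta p_j$ ($i,j<t$, $\alpha,\beta$ field elements), a product $x p_i$ ($i<t$, $x$ a variable), or (for the system in the $\{0,1\}$-variables $x_{v,j}$) a Boolean axiom $x^2-x$. For the system in the variables $y_v$ no Boolean axioms are used. A refutation is a derivation of $1$; its degree is the maximum total degree of its polynomials. *)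

From HB Require Import structures.
From mathcomp Require Import all_boot all_algebra.
From mathcomp Require Import mpoly.
Set Implicit Arguments. Unset Strict Implicit. Unset Printing Implicit Defensive.
Import GRing.Theory.
Local Open Scope ring_scope.

Section PC.
Variables (R : fieldType) (n : nat).

(* Total degree of a polynomial (the zero polynomial gets degree 0). *)
Definition pdeg (p : {mpoly R[n]}) : nat := (msize p).-1.

Definition pc_step (S : {mpoly R[n]} -> Prop) (bool_ax : bool)
  (prev : seq {mpoly R[n]}) (p : {mpoly R[n]}) : Prop :=
  [\/ S p,
      (exists q1 q2 (a b : R), [/\ q1 \in prev, q2 \in prev & p = a *: q1 + b *: q2]),
      (exists q (x : 'I_n), q \in prev /\ p = 'X_x * q)
    | bool_ax /\ (exists x : 'I_n, p = 'X_x ^+ 2 - 'X_x)].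

Definition pc_derivation (S : {mpoly R[n]} -> Prop) (bool_ax : bool)
  (s : seq {mpoly R[n]}) : Prop :=
  forall t, (t < size s)%N -> pc_step S bool_ax (take t s) (nth 0 s t).

Definition pc_degree (s : seq {mpoly R[n]}) : nat := \max_(p <- s) pdeg p.

Definition pc_refutation (S : {mpoly R[n]} -> Prop) (bool_ax : bool)
  (d : nat) : Prop :=
  exists s : seq {mpoly R[n]},
    [/\ pc_derivation S bool_ax s, s != [::], last 0 s = 1 & pc_degree s = d].
End PC.

Definition y_var (F : fieldType) (V : finType) (v : V) : {mpoly F[#|V|]} :=
  'X_(enum_rank v).

Definition y_system (F : fieldType) (V : finType) (e : rel V) (k : nat)
  (p : {mpoly F[#|V|]}) : Prop :=
  (exists v, p = y_var F v ^+ k - 1) \/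
  (exists u v, e u v /\
     p = \sum_(j < k) y_var F u ^+ j * y_var F v ^+ (k.-1 - j)).

Definition x_var (E : fieldType) (V : finType) (k : nat) (v : V) (j : 'I_k)
  : {mpoly E[#|{: V * 'I_k}|]} := 'X_(enum_rank (v, j)).

Definition x_system (E : fieldType) (V : finType) (e : rel V) (k : nat)
  (p : {mpoly E[#|{: V * 'I_k}|]}) : Prop :=
  [\/ (exists v, p = \sum_(j < k) x_var E v j - 1),
      (exists v (j j' : 'I_k), j != j' /\ p = x_var E v j * x_var E v j')
    | (exists u v (j : 'I_k), e u v /\ p = x_var E u j * x_var E v j)].

(** Let w be a primitive k-th root of unity and substitute
    y_v := sum_j w^j x_{v,j}.  Modulo x^2 = x and the axioms x_{v,j} x_{v,j'} = 0,
    products of linear forms in the variables of one vertex multiply coordinatewise,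
    so (sum_j w^j x_{v,j})^a reduces to sum_j w^(j a) x_{v,j} in low degree.  Hence
    y_v^k - 1 becomes sum_j x_{v,j} - 1, and the edge polynomial becomes
    sum_{c,c'} (sum_j w^(c j) w^(c' (k-1-j))) x_{u,c} x_{v,c'}, whose off-diagonal
    coefficients vanish since (w^c' - w^c) times them is w^(c' k) - w^(c k) = 0; the
    diagonal terms are edge axioms.  All of this takes degree at most 2k, and the
    substitution does not raise degrees, so the y-refutation is simulated line by
    line; a power x^max(2k,d) pads it to the exact degree.  The root w exists in a
    splitting field of X^k - 1, which is separable because k <> 0 in F. *)

From HB Require Import structures.
From mathcomp Require Import all_boot all_algebra.
From mathcomp Require Import mpoly.
From mathcomp Require Import fieldext separable cyclic cyclotomic.
From mathcomp Require Import zify.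
From Stdlib Require Import Classical.
Import GRing.Theory.
Local Open Scope ring_scope.

Lemma irreducible_factor {F : fieldType} {p : {poly F}} :
  (1 < size p)%N -> exists2 q : {poly F}, irreducible_poly q & q %| p.
Proof.
have [m] := ubnP (size p); elim: m p => // m IHm p ltpm gt1p.
have [irr_p | red_p] := classic (irreducible_poly p); first by exists p.
have [q [sq1 qp nqp]] :
    exists q : {poly F}, [/\ size q != 1%N, q %| p & ~~ (q %= p)].
  apply: NNPP => noq; apply: red_p; split=> // q sq1 qp.
  by apply/negPn/negP => nqp; apply: noq; exists q.
have p0 : p != 0 by rewrite -size_poly_gt0 ltnW.
have q0 : q != 0 by apply: contraNneq p0 => q0; rewrite -dvd0p -q0.
have gt1q : (1 < size q)%N.
  by move: sq1 q0; rewrite -size_poly_eq0; case: (size q) => [|[|]].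
have ltqp : (size q < size p)%N by rewrite ltn_neqAle dvdp_size_eqp // nqp dvdp_leq.
have [r irr_r rq] := IHm q (leq_trans ltqp ltpm) gt1q.
by exists r => //; apply: dvdp_trans qp.
Qed.

Lemma splitting_extension {F : fieldType} {p : {poly F}} : p \is monic ->
  exists (E : fieldType) (f : {rmorphism F -> E}) (rs : seq E),
    map_poly f p = \prod_(r <- rs) ('X - r%:P).
Proof.
have [m] := ubnP (size p); elim: m F p => // m IHm F p ltpm mon_p.
have [le1p | gt1p] := leqP (size p) 1.
  exists F, idfun, [::]; rewrite big_nil map_poly_id //.
  have p_1 : size p = 1%N by apply/anti_leq; rewrite le1p size_poly_gt0 monic_neq0.
  by rewrite (size1_polyC le1p) -polyC1 -(monicP mon_p) lead_coefE p_1.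
have [q irr_q qp] := irreducible_factor gt1p.
have [L _ [z qz _]] := irredp_FAdjoin irr_q.
have pz : root (map_poly (in_alg L) p) z.
  by case/dvdpP: qp => c ->; rewrite rmorphM rootM qz orbT.
have [p' def_p] := factor_theorem _ _ pz.
have mon_p' : p' \is monic.
  by rewrite -(monicMr _ (monicXsubC z)) -def_p map_monic.
have ltp'm : (size p' < m)%N.
  move: ltpm; rewrite -(size_map_poly (in_alg L)) def_p.
  by rewrite size_Mmonic ?monicXsubC ?monic_neq0 // size_XsubC addn2.
have [E [f [rs split_p']]] := IHm L p' ltp'm mon_p'.
exists E, (f \o in_alg L)%FUN, (f z :: rs).
rewrite big_cons map_poly_comp def_p rmorphM /= split_p' rmorphB /=.
by rewrite map_polyX map_polyC mulrC.
Qed.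

Lemma primitive_root_extension {F : fieldType} {k : nat} : (0 < k)%N ->
  (forall p, p \in [pchar F] -> ~~ (p %| k)%N) ->
  exists (E : fieldType) (f : {rmorphism F -> E}) (w : E), k.-primitive_root w.
Proof.
move=> k_gt0 pcharF.
have kF : k%:R != 0 :> F.
  apply/negP => k0; have [p pchar_p] := natf0_pchar k_gt0 k0.
  by move: (pcharF p pchar_p); rewrite (dvdn_pcharf pchar_p) k0.
have [E [f [rs split_rs]]] := splitting_extension (monicXnsubC (1 : F) k_gt0).
have {}split_rs : 'X^k - 1 = \prod_(r <- rs) ('X - r%:P).
  by rewrite -split_rs rmorphB /= map_polyXn rmorph1.
have uniq_rs : uniq rs.
  rewrite -separable_prod_XsubC -split_rs separable_Xn_sub_1 //.
  by rewrite -(rmorph_nat f) fmorph_eq0.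
have size_rs : size rs = k.
  by have := size_XnsubC (1 : E) k_gt0; rewrite split_rs size_prod_XsubC => -[].
have unity_rs : all k.-unity_root rs.
  apply/allP => r r_rs; rewrite unity_rootE -subr_eq0.
  by have := root_prod_XsubC rs r; rewrite -split_rs r_rs /root !hornerE.
have /hasP [w _ prim_w] := has_prim_root k_gt0 unity_rs uniq_rs (eq_leq (esym size_rs)).
by exists E, f, w.
Qed.

Section TotalDegree.
Context {R : fieldType} {n : nat}.
Implicit Types (p q : {mpoly R[n]}).

Lemma pdeg0 : pdeg (0 : {mpoly R[n]}) = 0%N.
Proof. by rewrite /pdeg msize0. Qed.

Lemma pdegC c : pdeg (c%:MP : {mpoly R[n]}) = 0%N.
Proof. by rewrite /pdeg msizeC; case: (c != 0). Qed.

Lemma pdeg1 : pdeg (1 : {mpoly R[n]}) = 0%N.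
Proof. exact: pdegC. Qed.

Lemma pdeg_varXn (i : 'I_n) k : pdeg ('X_i ^+ k : {mpoly R[n]}) = k.
Proof. by rewrite /pdeg mpolyXn msizeX mdegMn mdeg1 mul1n. Qed.

Lemma pdegX (i : 'I_n) : pdeg ('X_i : {mpoly R[n]}) = 1%N.
Proof. by rewrite -[X in pdeg X]expr1 pdeg_varXn. Qed.

Lemma pdegD p q : (pdeg (p + q) <= maxn (pdeg p) (pdeg q))%N.
Proof. by rewrite /pdeg; have := msizeD_le p q; lia. Qed.

Lemma pdegN p : pdeg (- p) = pdeg p.
Proof. by rewrite /pdeg msizeN. Qed.

Lemma pdegB p q : (pdeg (p - q) <= maxn (pdeg p) (pdeg q))%N.
Proof. by rewrite -(pdegN q) pdegD. Qed.

Lemma pdegZ c p : (pdeg (c *: p) <= pdeg p)%N.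
Proof. by rewrite /pdeg; have := msizeZ_le p c; lia. Qed.

Lemma pdegM p q : (pdeg (p * q) <= pdeg p + pdeg q)%N.
Proof.
have [-> | p0] := eqVneq p 0; first by rewrite mul0r pdeg0.
have [-> | q0] := eqVneq q 0; first by rewrite mulr0 pdeg0.
rewrite /pdeg msizeM //; move: p0 q0; rewrite -!msize_poly_eq0.
by move: (msize p) (msize q) => [|a] [|c] // _ _; rewrite addnS.
Qed.

Lemma pdegMX (i : 'I_n) p : p != 0 -> pdeg ('X_i * p) = (pdeg p).+1.
Proof.
move=> p0; have X0 : 'X_i != 0 :> {mpoly R[n]} by rewrite -msize_poly_eq0 msizeX.
rewrite /pdeg msizeM // msizeX mdeg1; move: p0; rewrite -msize_poly_eq0.
by move: (msize p) => [|a] // _; rewrite addn2.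
Qed.

Lemma pdegXn p k : (pdeg (p ^+ k) <= k * pdeg p)%N.
Proof.
elim: k => [|k IHk]; first by rewrite expr0 pdeg1.
by rewrite exprS mulSn (leq_trans (pdegM _ _)) // leq_add2l.
Qed.

Lemma pdeg_sum (I : Type) (r : seq I) (P : pred I) (F : I -> {mpoly R[n]}) d :
  (forall i, P i -> pdeg (F i) <= d)%N -> (pdeg (\sum_(i <- r | P i) F i) <= d)%N.
Proof.
move=> le_Fd; apply: (big_ind (fun p => pdeg p <= d)%N) => //; first by rewrite pdeg0.
by move=> p q le_pd le_qd; rewrite (leq_trans (pdegD p q)) // geq_max le_pd.
Qed.

Lemma pdeg_prod (I : Type) (r : seq I) (P : pred I) (F : I -> {mpoly R[n]}) :
  (pdeg (\prod_(i <- r | P i) F i) <= \sum_(i <- r | P i) pdeg (F i))%N.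
Proof.
apply: (big_ind2 (fun p d => pdeg p <= d)%N) => //; first by rewrite pdeg1.
by move=> p d q d' le_pd le_qd; rewrite (leq_trans (pdegM p q)) ?leq_add.
Qed.

End TotalDegree.

Section Derivations.
Context {R : fieldType} {n : nat} {S : {mpoly R[n]} -> Prop} {b : bool}.
Implicit Types (p q : {mpoly R[n]}) (s : seq {mpoly R[n]}).

Lemma pc_step_subset prev prev' p :
  {subset prev <= prev'} -> pc_step S b prev p -> pc_step S b prev' p.
Proof.
move=> sub [Sp | [q1 [q2 [a [c [q1_prev q2_prev ->]]]]] | [q [i [q_prev ->]]] | bool_p].
- exact: Or41.
- by apply: Or42; exists q1, q2, a, c; split; auto.
- by apply: Or43; exists q, i; split; auto.
- exact: Or44.
Qed.

Lemma pc_derivation_cat s1 s2 :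
  pc_derivation S b s1 -> pc_derivation S b s2 -> pc_derivation S b (s1 ++ s2).
Proof.
move=> der1 der2 t; rewrite size_cat nth_cat take_cat => lt_t.
case: ltnP => [|le_s1t]; first exact: der1.
apply: pc_step_subset (der2 _ _); last by rewrite ltn_subLR.
by move=> q; rewrite mem_cat => ->; rewrite orbT.
Qed.

Lemma pc_derivation_rcons s p :
  pc_derivation S b s -> pc_step S b s p -> pc_derivation S b (rcons s p).
Proof.
move=> der_s step_p t; rewrite size_rcons ltnS nth_rcons -cats1 take_cat.
rewrite leq_eqVlt => /predU1P [-> | lt_ts]; last by rewrite lt_ts; apply: der_s.
by rewrite ltnn subnn take0 cats0 eqxx.
Qed.

Lemma pc_derivation_ind {P : {mpoly R[n]} -> Prop} {s} :
  pc_derivation S b s ->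
  (forall prev p, p \in s -> pc_step S b prev p -> {in prev, forall q, P q} -> P p) ->
  {in s, forall p, P p}.
Proof.
move=> der_s IH; suff P_take t : (t <= size s)%N -> {in take t s, forall p, P p}.
  by move=> p; rewrite -[s in p \in s]take_size; apply: P_take.
elim: t => [|t IHt] lt_ts p; first by rewrite take0.
rewrite (take_nth 0 lt_ts) mem_rcons inE => /predU1P [-> | ]; last exact/IHt/ltnW.
exact: IH (mem_nth 0 lt_ts) (der_s t lt_ts) (IHt (ltnW lt_ts)).
Qed.

End Derivations.

Lemma pc_derivation_without_axioms {R : fieldType} {n : nat}
    {S : {mpoly R[n]} -> Prop} {s : seq {mpoly R[n]}} :
  (forall p, ~ S p) -> pc_derivation S false s -> {in s, forall p, p = 0}.
Proof.
move=> noS der_s; apply: (pc_derivation_ind der_s) => prev p _ step eq0.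
case: step => [/noS [] | [q1 [q2 [a [c [q1_prev q2_prev ->]]]]] | [q [i [q_prev ->]]] | [//]].
- by rewrite (eq0 _ q1_prev) (eq0 _ q2_prev) !scaler0 addr0.
- by rewrite (eq0 _ q_prev) mulr0.
Qed.

Definition pc_derivable {R : fieldType} {n : nat} (S : {mpoly R[n]} -> Prop)
    (b : bool) (D : nat) (p : {mpoly R[n]}) : Prop :=
  exists s, [/\ pc_derivation S b s, p \in s & {in s, forall q, pdeg q <= D}%N].

Section Derivable.
Context {R : fieldType} {n : nat} {S : {mpoly R[n]} -> Prop} {b : bool} {D : nat}.
Implicit Types (p q : {mpoly R[n]}) (s : seq {mpoly R[n]}).
Local Notation derivable := (pc_derivable S b D).

Lemma derivable_deg {p} : derivable p -> (pdeg p <= D)%N.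
Proof. by case=> s [_ p_s deg_s]; apply: deg_s. Qed.

Lemma derivable_step {s p} : pc_derivation S b s -> {in s, forall q, pdeg q <= D}%N ->
  pc_step S b s p -> (pdeg p <= D)%N -> derivable p.
Proof.
move=> der_s deg_s step_p deg_p; exists (rcons s p); split.
- exact: pc_derivation_rcons.
- by rewrite mem_rcons mem_head.
- by move=> q; rewrite mem_rcons inE => /predU1P [-> | /deg_s].
Qed.

Lemma derivable_axiom p : S p -> (pdeg p <= D)%N -> derivable p.
Proof. by move=> Sp; apply: (derivable_step (s := [::])) => //; apply: Or41. Qed.

Lemma derivable_boolean (i : 'I_n) : b -> (2 <= D)%N -> derivable ('X_i ^+ 2 - 'X_i).
Proof.
move=> b_true le2D; apply: (derivable_step (s := [::])) => //.
  by apply: Or44; split => //; exists i.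
by rewrite (leq_trans (pdegB _ _)) // pdeg_varXn pdegX.
Qed.

Lemma derivable_lincomb a c {p q} :
  derivable p -> derivable q -> derivable (a *: p + c *: q).
Proof.
move=> der_p der_q; have deg_p := derivable_deg der_p; have deg_q := derivable_deg der_q.
case: der_p der_q => [s1 [der1 p_s1 deg1]] [s2 [der2 q_s2 deg2]].
apply: (derivable_step (s := s1 ++ s2)).
- exact: pc_derivation_cat.
- by move=> r; rewrite mem_cat => /orP [/deg1 | /deg2].
- by apply: Or42; exists p, q, a, c; rewrite !mem_cat p_s1 q_s2 orbT.
- rewrite (leq_trans (pdegD _ _)) // geq_max.
  by rewrite !(leq_trans (pdegZ _ _)).
Qed.

Lemma derivable_mulX (i : 'I_n) p :
  derivable p -> (pdeg ('X_i * p) <= D)%N -> derivable ('X_i * p).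
Proof.
case=> s [der_s p_s deg_s] deg_Xp; apply: (derivable_step der_s) => //.
by apply: Or43; exists p, i.
Qed.

Lemma derivableZ a {p} : derivable p -> derivable (a *: p).
Proof. by move=> der_p; have := derivable_lincomb a 0 der_p der_p; rewrite scale0r addr0. Qed.

Lemma derivableD {p q} : derivable p -> derivable q -> derivable (p + q).
Proof. by move=> der_p der_q; have := derivable_lincomb 1 1 der_p der_q; rewrite !scale1r. Qed.

Lemma derivable0 {p} : derivable p -> derivable 0.
Proof. by move=> der_p; have := derivableZ 0 der_p; rewrite scale0r. Qed.

Lemma derivable_sum (I : Type) (r : seq I) (P : pred I) (F : I -> {mpoly R[n]}) :
  derivable 0 -> (forall i, P i -> derivable (F i)) -> derivable (\sum_(i <- r | P i) F i).
Proof. by move=> der0 der_F; apply: (big_ind derivable) => // p q; apply: derivableD. Qed.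

Lemma derivable_mulXn (i : 'I_n) k p :
  derivable p -> (k + pdeg p <= D)%N -> derivable ('X_i ^+ k * p).
Proof.
move=> der_p; elim: k => [|k IHk] deg_D; first by rewrite mul1r.
rewrite exprS -mulrA; apply: derivable_mulX; first by apply: IHk; apply: ltnW.
rewrite (leq_trans (pdegM _ _)) // pdegX (leq_trans _ deg_D) // add1n ltnS.
by rewrite (leq_trans (pdegM _ _)) // pdeg_varXn.
Qed.

Lemma derivable_mul_monomial (m : 'X_{1..n}) p :
  derivable p -> (mdeg m + pdeg p <= D)%N -> derivable ('X_[m] * p).
Proof.
rewrite mpolyXE_id mdegE; elim: (index_enum _) p => [|i r IHr] p der_p.
  by rewrite !big_nil mul1r.
rewrite !big_cons /= -mulrA mulrCA => deg_D.
have deg_Xp : (pdeg ('X_i ^+ m i * p) <= m i + pdeg p)%N.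
  by rewrite (leq_trans (pdegM _ _)) ?pdeg_varXn.
apply: IHr; last by rewrite (leq_trans _ deg_D) // (addnC (m i)) -addnA leq_add2l.
by apply: derivable_mulXn; rewrite // (leq_trans _ deg_D) // -addnA leq_add2l leq_addl.
Qed.

Lemma derivable_mul q p : derivable p -> (pdeg q + pdeg p <= D)%N -> derivable (q * p).
Proof.
move=> der_p deg_D; rewrite (mpolyE q) mulr_suml big_seq.
apply: derivable_sum (derivable0 der_p) _ => m m_q.
rewrite -scalerAl; apply/derivableZ/derivable_mul_monomial => //.
by rewrite (leq_trans _ deg_D) // leq_add2r -ltnS (leq_trans (msize_mdeg_lt m_q)) ?leqSpred.
Qed.

Lemma pc_refutation_of_derivable1 (i : 'I_n) : derivable 1 -> pc_refutation S b D.
Proof.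
move=> der1; have [s' [der_s' Xs' deg_s']] : derivable ('X_i ^+ D * 1).
  by apply: derivable_mulXn; rewrite // pdeg1 addn0.
rewrite mulr1 in Xs'; case: der1 => s [der_s one_s deg_s].
exists (rcons (s' ++ s) 1); split.
- apply: pc_derivation_rcons; first exact: pc_derivation_cat.
  by apply: Or42; exists 1, 1, 1, 0; rewrite scale1r scale0r addr0 mem_cat one_s orbT.
- by rewrite -size_eq0 size_rcons.
- by rewrite last_rcons.
- apply/eqP; rewrite eqn_leq; apply/andP; split.
    apply/bigmax_leqP_seq => p; rewrite mem_rcons inE mem_cat.
    by case/or3P => [/eqP -> | /deg_s' | /deg_s]; rewrite ?pdeg1.
  rewrite -{1}(pdeg_varXn (R := R) i D); apply: leq_bigmax_seq => //.
  by rewrite mem_rcons inE mem_cat Xs' orbT.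
Qed.

End Derivable.

Section Substitution.
Context {F E : fieldType} (f : {rmorphism F -> E}) {n m : nat}.
Variable h : 'I_n -> {mpoly E[m]}.
Hypothesis pdeg_h : forall i, (pdeg (h i) <= 1)%N.
Local Notation subst := (mmap (@mpolyC m E \o f) h).

Lemma subst_var i : subst 'X_i = h i.
Proof. by rewrite mmapX mmap1U. Qed.

Lemma substZ a p : subst (a *: p) = f a *: subst p.
Proof. by rewrite mmapZ /= mul_mpolyC. Qed.

Lemma pdeg_subst p : (pdeg (subst p) <= pdeg p)%N.
Proof.
rewrite /mmap big_seq; apply: pdeg_sum => mo mo_p.
rewrite (leq_trans (pdegM _ _)) //= pdegC add0n (leq_trans (pdeg_prod _ _ _ _)) //.
rewrite (@leq_trans (mdeg mo)) //.
  rewrite mdegE leq_sum // => i _.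
  by rewrite (leq_trans (pdegXn _ _)) // -[X in (_ <= X)%N]muln1 leq_mul.
by rewrite /pdeg -ltnS (leq_trans (msize_mdeg_lt mo_p)) ?leqSpred.
Qed.

Lemma derivable_subst {S : {mpoly F[n]} -> Prop} {T : {mpoly E[m]} -> Prop} {b D s} :
  pc_derivation S false s -> {in s, forall p, pdeg p <= D}%N ->
  (forall p, S p -> pc_derivable T b D (subst p)) ->
  {in s, forall p, pc_derivable T b D (subst p)}.
Proof.
move=> der_s deg_s der_S; apply: (pc_derivation_ind der_s) => prev p p_s step IH.
move: (deg_s p p_s).
case: step => [Sp _ | [q1 [q2 [a [c [q1_prev q2_prev ->]]]]] _ | [q [i [q_prev ->]]] | [//]].
- exact: der_S.
- by rewrite rmorphD /= !substZ; apply: derivable_lincomb; apply: IH.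
have [-> | q0] := eqVneq q 0.
  by rewrite mulr0 rmorph0 => _; apply: derivable0 (IH _ q_prev).
rewrite pdegMX // rmorphM /= subst_var => deg_Xq; apply: derivable_mul; first exact: IH.
by rewrite (leq_trans _ deg_Xq) // -add1n leq_add ?pdeg_h ?pdeg_subst.
Qed.

End Substitution.

Lemma prim_root_cross_sum (R : idomainType) (k : nat) (w : R) (c c' : 'I_k) :
  k.-primitive_root w -> c != c' ->
  \sum_(j < k) w ^+ (c * j) * w ^+ (c' * (k.-1 - j)) = 0.
Proof.
move=> prim_w neq_cc'.
have neq_z : w ^+ c' - w ^+ c != 0.
  by rewrite subr_eq0 (eq_prim_root_expr prim_w) !modn_small // eq_sym.
have : (w ^+ c') ^+ k - (w ^+ c) ^+ k = 0.
  by rewrite -!exprM ![(_ * k)%N]mulnC !exprM (prim_expr_order prim_w) !expr1n subrr.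
rewrite subrXX => /eqP; rewrite mulf_eq0 (negbTE neq_z) /= => /eqP sum0.
by rewrite -[RHS]sum0; apply: eq_bigr => j _; rewrite mulrC !exprM.
Qed.

Section ColouringEncoding.
Context {E : fieldType} {V : finType} (e : rel V) {k : nat} (w : E) {D : nat}.
Hypotheses (k_gt0 : (0 < k)%N) (prim_w : k.-primitive_root w) (le2kD : (2 * k <= D)%N).

Implicit Types (u v : V) (i j : 'I_k).

Local Notation x := (x_var E).
Local Notation derivable := (pc_derivable (@x_system E V e k) true D).

Definition root_form (v : V) (a : nat) : {mpoly E[#|{: V * 'I_k}|]} :=
  \sum_(j < k) w ^+ (j * a) *: x v j.

Lemma pdeg_root_form v a : (pdeg (root_form v a) <= 1)%N.
Proof. by apply: pdeg_sum => j _; rewrite (leq_trans (pdegZ _ _)) ?pdegX. Qed.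

Lemma pdeg_root_form_expr v a :
  (pdeg (root_form v 1 ^+ a - root_form v a) <= maxn a 1)%N.
Proof.
have deg_pow : (pdeg (root_form v 1 ^+ a) <= a)%N.
  by rewrite (leq_trans (pdegXn _ _)) // -{2}[a]muln1 leq_mul ?pdeg_root_form.
rewrite (leq_trans (pdegB _ _)) // geq_max (leq_trans deg_pow) ?leq_maxl //.
by rewrite (leq_trans (pdeg_root_form v a)) ?leq_maxr.
Qed.

Lemma derivable_x_boolean v j : derivable (x v j ^+ 2 - x v j).
Proof. by apply: derivable_boolean => //; lia. Qed.

Lemma derivable_x0 v : derivable 0.
Proof. exact: derivable0 (derivable_x_boolean v (Ordinal k_gt0)). Qed.

Lemma derivable_x_axiom p : x_system e p -> (pdeg p <= 2)%N -> derivable p.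
Proof. by move=> Xp deg_p; apply: derivable_axiom => //; lia. Qed.

Lemma pdeg_x_sum_sub1 v : (pdeg (\sum_(j < k) x v j - 1) <= 2)%N.
Proof.
rewrite (leq_trans (pdegB _ _)) // pdeg1 maxn0 (leq_trans _ (leqnSn 1)) //.
by apply: pdeg_sum => j _; rewrite pdegX.
Qed.

Lemma pdeg_x_mul u v i j : (pdeg (x u i * x v j) <= 2)%N.
Proof. by rewrite (leq_trans (pdegM _ _)) ?pdegX. Qed.

Lemma derivable_mul_forms v (c d : 'I_k -> E) :
  derivable ((\sum_(i < k) c i *: x v i) * (\sum_(j < k) d j *: x v j)
             - \sum_(j < k) (c j * d j) *: x v j).
Proof.
rewrite mulr_suml -sumrB; apply: derivable_sum (derivable_x0 v) _ => i _.
have scale_mul j : c i *: x v i * (d j *: x v j) = (c i * d j) *: (x v i * x v j).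
  by rewrite -scalerAl -scalerAr scalerA.
rewrite mulr_sumr (bigD1 i) //= scale_mul (eq_bigr _ (fun j _ => scale_mul j)).
rewrite addrAC -scalerBr -expr2; apply: derivableD.
  exact/derivableZ/derivable_x_boolean.
apply: derivable_sum (derivable_x0 v) _ => j neq_ji; apply/derivableZ/derivable_x_axiom.
  by apply: Or32; exists v, i, j; rewrite eq_sym.
exact: pdeg_x_mul.
Qed.

Lemma derivable_root_form_expr v a :
  (a <= D)%N -> derivable (root_form v 1 ^+ a - root_form v a).
Proof.
elim: a => [|a IHa] le_aD.
  rewrite expr0 /root_form (eq_bigr (x v)) => [|j _]; last by rewrite muln0 scale1r.
  rewrite -opprB -scaleN1r; apply/derivableZ/derivable_x_axiom.
    by apply: Or31; exists v.
  exact: pdeg_x_sum_sub1.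
have -> : root_form v 1 ^+ a.+1 - root_form v a.+1 =
    root_form v 1 * (root_form v 1 ^+ a - root_form v a) +
    (root_form v 1 * root_form v a - \sum_(j < k) (w ^+ (j * 1) * w ^+ (j * a)) *: x v j).
  rewrite exprS mulrBr addrA subrK; congr (_ - _); apply: eq_bigr => j _.
  by rewrite -exprD -mulnDr add1n.
apply: derivableD; last exact: derivable_mul_forms.
apply: derivable_mul; first by apply: IHa; apply: ltnW.
have := pdeg_root_form v 1; have := pdeg_root_form_expr v a; lia.
Qed.

Lemma derivable_root_form_vertex v : derivable (root_form v 1 ^+ k - 1).
Proof.
have -> : root_form v 1 ^+ k - 1 =
    (root_form v 1 ^+ k - root_form v k) + (root_form v k - 1) by rewrite addrA subrK.
apply: derivableD; first by apply: derivable_root_form_expr; lia.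
have -> : root_form v k = \sum_(j < k) x v j.
  by apply: eq_bigr => j _; rewrite mulnC exprM (prim_expr_order prim_w) expr1n scale1r.
by apply: derivable_x_axiom; [apply: Or31; exists v | apply: pdeg_x_sum_sub1].
Qed.

Lemma derivable_root_form_mul u v a c : (a + c < D)%N ->
  derivable (root_form u 1 ^+ a * root_form v 1 ^+ c - root_form u a * root_form v c).
Proof.
move=> lt_acD.
have -> : root_form u 1 ^+ a * root_form v 1 ^+ c - root_form u a * root_form v c =
    root_form v 1 ^+ c * (root_form u 1 ^+ a - root_form u a) +
    root_form u a * (root_form v 1 ^+ c - root_form v c).
  by rewrite mulrBr mulrBr [_ * root_form u a]mulrC addrA subrK mulrC.
have deg_vc : (pdeg (root_form v 1 ^+ c) <= c)%N.
  by rewrite (leq_trans (pdegXn _ _)) // -{2}[c]muln1 leq_mul ?pdeg_root_form.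
have deg_ua := pdeg_root_form u a.
have deg_ua_expr := pdeg_root_form_expr u a.
have deg_vc_expr := pdeg_root_form_expr v c.
apply: derivableD; apply: derivable_mul; try lia; apply: derivable_root_form_expr; lia.
Qed.

Lemma derivable_root_form_edge u v : e u v ->
  derivable (\sum_(j < k) root_form u 1 ^+ j * root_form v 1 ^+ (k.-1 - j)).
Proof.
move=> euv.
rewrite -[\sum_(j < k) _](subrK (\sum_(j < k) root_form u j * root_form v (k.-1 - j))).
rewrite -sumrB; apply: derivableD.
  apply: derivable_sum (derivable_x0 v) _ => j _.
  by apply: derivable_root_form_mul; have := ltn_ord j; lia.
have -> : \sum_(j < k) root_form u j * root_form v (k.-1 - j) =
    \sum_(c < k) \sum_(c' < k)
      (\sum_(j < k) w ^+ (c * j) * w ^+ (c' * (k.-1 - j))) *: (x u c * x v c').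
  under eq_bigr do rewrite /root_form mulr_suml.
  rewrite exchange_big /=; apply: eq_bigr => c _.
  under eq_bigr do rewrite mulr_sumr.
  rewrite exchange_big /=; apply: eq_bigr => c' _.
  rewrite scaler_suml; apply: eq_bigr => j _.
  by rewrite -scalerAl -scalerAr scalerA.
apply: derivable_sum (derivable_x0 v) _ => c _.
apply: derivable_sum (derivable_x0 v) _ => c' _.
have [<- | neq_cc'] := eqVneq c c'; last first.
  by rewrite prim_root_cross_sum // scale0r; apply: derivable_x0 v.
apply/derivableZ/derivable_x_axiom; last exact: pdeg_x_mul.
by apply: Or33; exists u, v, c.
Qed.

Definition root_form_subst (i : 'I_#|V|) := root_form (enum_val i) 1.

Lemma pdeg_root_form_subst (i : 'I_#|V|) : (pdeg (root_form_subst i) <= 1)%N.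
Proof. exact: pdeg_root_form. Qed.

Lemma derivable_subst_y_system {F : fieldType} (f : {rmorphism F -> E}) p :
  y_system e k p -> derivable (mmap (@mpolyC _ E \o f) root_form_subst p).
Proof.
have subst_y v : mmap (@mpolyC _ E \o f) root_form_subst (y_var F v) = root_form v 1.
  by rewrite subst_var /root_form_subst enum_rankK.
case=> [[v ->] | [u [v [euv ->]]]].
  by rewrite rmorphB rmorphXn rmorph1 /= subst_y; apply: derivable_root_form_vertex.
rewrite rmorph_sum; under eq_bigr do rewrite rmorphM !rmorphXn /= !subst_y.
exact: derivable_root_form_edge.
Qed.

End ColouringEncoding.

Theorem proposition2p2 (V : finType) (e : rel V) (k d : nat) (F : fieldType) :
  (forall u v, e u v = e v u) -> (forall v, ~~ e v v) -> (0 < k)%N ->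
  (forall p : nat, p \in [pchar F] -> ~~ (p %| k)%N) ->
  pc_refutation (@y_system F V e k) false d ->
  exists (E : fieldType) (f : {rmorphism F -> E}) (w : E),
    k.-primitive_root w /\
    pc_refutation (@x_system E V e k) true (maxn (2 * k) d).
Proof.
move=> _ _ k_gt0 pcharF [s [der_s s_nil last_s deg_s]].
have [E [f [w prim_w]]] := primitive_root_extension k_gt0 pcharF.
exists E, f, w; split => //.
have one_s : 1 \in s.
  by case: s s_nil last_s {der_s deg_s} => // p s _ <- /=; apply: mem_last.
have deg_sD : {in s, forall p, pdeg p <= maxn (2 * k) d}%N.
  by move=> p p_s; rewrite leq_max -deg_s (leq_bigmax_seq _ p_s) ?orbT.
have [v _ | V0] := pickP (@predT V); last first.
  have no_y (p : {mpoly F[#|V|]}) : ~ y_system e k p.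
    by case=> [[v _] | [v [? _]]]; move: (V0 v).
  by move/eqP: (pc_derivation_without_axioms no_y der_s _ one_s); rewrite oner_eq0.
apply: (pc_refutation_of_derivable1 (enum_rank (v, Ordinal k_gt0))).
have der_y := derivable_subst_y_system e w k_gt0 prim_w (leq_maxl _ d) f.
have := derivable_subst f _ (pdeg_root_form_subst w) der_s deg_sD der_y _ one_s.
by rewrite rmorph1.
Qed.
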